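(* Let $\mathbb{X}$ be a complete intersection of type $(d_1,d_2)$ in $\mathbb{P}^1\times\mathbb{P}^1$ over a field $K$ of characteristic zero with $d_1\le d_2$, with coordinates chosen so that $x_0,y_0$ is a regular sequence in $R_{\mathbb{X}}$. Then the first difference function $\Delta$ of $\operatorname{HF}_{\vartheta_{\mathbb{X}}}$ satisfies, for $(i,j)\in\mathbb{N}^2$: $\Delta(i,j)=1$ if $d_1-1\le i\le 2d_1-2$ and $d_2-1\le j\le 2d_2-2$, and $\Delta(i,j)=0$ otherwise.
   Context: $S=K[X_0,X_1,Y_0,Y_1]$ with $\deg X_i=(1,0)$, $\deg Y_i=(0,1)$. $\mathbb{X}$ is a complete intersection of type $(d_1,d_2)$ if its vanishing ideal $I_{\mathbb{X}}$ is generated by bihomogeneous polynomials of degrees $(d_1,0)$ and $(0,d_2)$. $R_{\mathbb{X}}=S/I_{\mathbb{X}}$, $x_i,y_i$ the images of $X_i,Y_i$. The Kähler different $\vartheta_{\mathbb{X}}$ is the ideal of $R_{\mathbb{X}}$ generated by the residue classes of $\frac{\partial F_a}{\partial X_1}\frac{\partial F_b}{\partial Y_1}-\frac{\partial F_b}{\partial X_1}\frac{\partial F_a}{\partial Y_1}$ for bihomogeneous generators $F_1,\dots,F_u$ of $I_{\mathbb{X}}$; $\operatorname{HF}_{\vartheta_{\mathbb{X}}}(i,j)=\dim_K(\vartheta_{\mathbb{X}})_{i,j}$. The first difference function of $H$ is $\Delta H(i,j)=H(i,j)-H(i-1,j)-H(i,j-1)+H(i-1,j-1)$ with $H(i,j)=0$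 if $i<0$ or $j<0$. *)

From Stdlib Require Import ClassicalEpsilon.
From mathcomp Require Import all_boot all_order all_algebra.
From mathcomp Require Import mpoly.
Set Implicit Arguments. Unset Strict Implicit. Unset Printing Implicit Defensive.
Import GRing.Theory.
Local Open Scope ring_scope.

(* S = K[X_0,X_1,Y_0,Y_1] is {mpoly K[4]} with variables
   X_0 = 'X_0, X_1 = 'X_1, Y_0 = 'X_2, Y_1 = 'X_3. *)
Definition iX0 : 'I_4 := @Ordinal 4 0 isT.
Definition iX1 : 'I_4 := @Ordinal 4 1 isT.
Definition iY0 : 'I_4 := @Ordinal 4 2 isT.
Definition iY1 : 'I_4 := @Ordinal 4 3 isT.

Section Bigraded.
Variable K : fieldType.
Notation S := {mpoly K[4]}.

Definition mbideg (m : 'X_{1..4}) : nat * nat := (m iX0 + m iX1, m iY0 + m iY1)%N.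

(* p is bihomogeneous of degree (i,j) (0 is bihomogeneous of every degree) *)
Definition bihom (i j : nat) (p : S) : Prop :=
  forall m, m \in msupp p -> mbideg m = (i, j).

Definition bicomp (i j : nat) (p : S) : S :=
  \sum_(m <- msupp p | mbideg m == (i, j)) p@_m *: 'X_[m].

(* a point of P^1 x P^1 given by representatives ([a0:a1],[b0:b1]) *)
Definition point_ok (P : (K * K) * (K * K)) : Prop :=
  (P.1 != (0, 0)) /\ (P.2 != (0, 0)).

Definition eval_pt (P : (K * K) * (K * K)) (p : S) : K :=
  p.@[fun k : 'I_4 => match val k with
                      | 0 => P.1.1 | 1 => P.1.2 | 2 => P.2.1 | _ => P.2.2 end].

(* vanishing ideal I_X: the ideal generated by the bihomogeneous polynomials
   vanishing on X; p belongs to it iff all its bihomogeneous components vanish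
   at every point of X. *)
Definition in_vanishing_ideal (X : seq ((K * K) * (K * K))) (p : S) : Prop :=
  forall i j P, P \in X -> eval_pt P (bicomp i j p) = 0.

Definition in_ideal (gs : seq S) (p : S) : Prop :=
  exists c : nat -> S, p = \sum_(k < size gs) c k * gs`_k.

(* generators of the ideal of S whose image in R_X is the Kähler different:
   dF_a/dX_1 * dF_b/dY_1 - dF_b/dX_1 * dF_a/dY_1 for generators F_a, F_b *)
Definition kahler_gens (gs : seq S) : seq S :=
  [seq (a^`M(iX1)) * (b^`M(iY1)) - (b^`M(iX1)) * (a^`M(iY1)) | a <- gs, b <- gs].

(* dimension of a (finite-dim) space described via "there is an independent
   family of size n": the largest such n (0 if no largest exists). *)
Definition maxnat (P : nat -> Prop) : nat :=
  match excluded_middle_informative (exists n, P n /\ forall m, P m -> (m <= n)%N) with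
  | left h => proj1_sig (constructive_indefinite_description _ h)
  | right _ => 0%N
  end.

(* HF of an ideal of R = S / I, whose preimage contains I and is generated
   (together with I) by the list Jg:  dim_K of its (i,j) piece, i.e. the
   maximal number of bihomogeneous elements of degree (i,j) of the ideal
   (Jg) of S that are K-linearly independent modulo I. *)
Definition HF_quot_ideal (I : S -> Prop) (Jg : seq S) (i j : nat) : nat :=
  maxnat (fun n => exists g : 'I_n -> S,
     (forall k, in_ideal Jg (g k) /\ bihom i j (g k)) /\
     (forall c : 'I_n -> K, I (\sum_(k < n) c k *: g k) -> forall k, c k = 0)).

End Bigraded.

(* first difference function, with H(i,j) = 0 for i < 0 or j < 0 *)
Definition Delta (H : nat -> nat -> nat) (i j : nat) : int :=
  (H i j)%:Z
  - (if i is i'.+1 then (H i' j)%:Z else 0)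
  - (if j is j'.+1 then (H i j')%:Z else 0)
  + (match i, j with i'.+1, j'.+1 => (H i' j')%:Z | _, _ => 0 end).

(* Regularity of x0, and of y0 modulo x0, puts every point of X in the chart x0 y0 <> 0, where
   F and G dehomogenise to polynomials of degree at most d1 and d2 vanishing on the sets T and U
   of affine coordinates of X. Since I_X = (F, G), the product of the lines through T lies in
   (F) and that through U in (G); hence #T = d1, #U = d2, X is the whole grid T x U, and F and
   G have simple roots. So the Kaehler different is generated by D = dF/dX1 * dG/dY1, which
   vanishes nowhere on X, and its piece of bidegree (i, j) modulo I_X is the space of
   restrictions to T x U of the forms of bidegree (i - d1 + 1, j - d2 + 1). Lagrange
   interpolation in each factor gives the dimension min(i - d1 + 2, d1) * min(j - d2 + 2, d2),
   a product whose first difference is the indicator of the box. *)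

From HB Require Import structures.
From mathcomp Require Import all_boot all_order all_algebra.
From mathcomp Require Import mpoly.
From mathcomp Require Import zify ring.
From Stdlib Require Import ClassicalEpsilon.
Set Implicit Arguments. Unset Strict Implicit. Unset Printing Implicit Defensive.
Import GRing.Theory.
Local Open Scope ring_scope.

Section Bihomogeneous.
Variable K : fieldType.
Notation S := {mpoly K[4]}.
Implicit Types (p q : S) (m : 'X_{1..4}).

Lemma bihomP i j p : bihom i j p <-> (forall m, p@_m != 0 -> mbideg m = (i, j)).
Proof. by split=> h m; [rewrite -mcoeff_msupp; apply: h | rewrite mcoeff_msupp; apply: h]. Qed.

Lemma bihom0 i j : bihom i j (0 : S).
Proof. by apply/bihomP=> m; rewrite mcoeff0 eqxx. Qed.

Lemma bihomD i j p q : bihom i j p -> bihom i j q -> bihom i j (p + q).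
Proof.
move=> /bihomP hp /bihomP hq; apply/bihomP=> m; rewrite mcoeffD.
by case: (eqVneq p@_m 0) => [->|/hp //]; rewrite add0r; apply: hq.
Qed.

Lemma bihomZ i j c p : bihom i j p -> bihom i j (c *: p).
Proof.
by move=> /bihomP hp; apply/bihomP=> m; rewrite mcoeffZ mulf_eq0 negb_or => /andP[_ /hp].
Qed.

Lemma bihomB i j p q : bihom i j p -> bihom i j q -> bihom i j (p - q).
Proof. by move=> hp hq; rewrite -scaleN1r; apply/bihomD/bihomZ. Qed.

Lemma bihom_sum i j (I : Type) (r : seq I) (P : pred I) (f : I -> S) :
  (forall k, P k -> bihom i j (f k)) -> bihom i j (\sum_(k <- r | P k) f k).
Proof. by move=> h; elim/big_rec: _ => [|k x /h]; [apply: bihom0 | apply: bihomD]. Qed.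

Lemma mbidegD m1 m2 :
  mbideg (m1 + m2)%MM = ((mbideg m1).1 + (mbideg m2).1, (mbideg m1).2 + (mbideg m2).2)%N.
Proof. by rewrite /mbideg !mnmDE /=; congr pair; rewrite addnACA. Qed.

Lemma bihomM i1 j1 i2 j2 p q : bihom i1 j1 p -> bihom i2 j2 q ->
  bihom (i1 + i2) (j1 + j2) (p * q).
Proof.
move=> hp hq m /msuppM_le /allpairsP [[m1 m2] /= [h1 h2 ->]].
by rewrite mbidegD (hp _ h1) (hq _ h2).
Qed.

Lemma bihomC c : bihom 0 0 (c%:MP : S).
Proof.
apply/bihomP=> m; rewrite mcoeffC; case: (eqVneq m 0%MM) => [->|_].
  by rewrite /mbideg !mnm0E.
by rewrite mulr0 eqxx.
Qed.

Lemma bihomXn a b n p : bihom a b p -> bihom (a * n) (b * n) (p ^+ n).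
Proof.
move=> hp; elim: n => [|n IH]; first by rewrite expr0 !muln0 -mpolyC1; apply: bihomC.
by rewrite exprS !mulnS; apply: bihomM.
Qed.

Lemma bihom_prod (T : Type) a b (r : seq T) (f : T -> S) :
  (forall x, bihom a b (f x)) -> bihom (a * size r) (b * size r) (\prod_(x <- r) f x).
Proof.
move=> h; elim: r => [|x r IH]; first by rewrite big_nil !muln0 -mpolyC1; apply: bihomC.
by rewrite big_cons /= !mulnS; apply: bihomM.
Qed.

Lemma bihomX_X0 : bihom 1 0 ('X_iX0 : S).
Proof. by move=> m; rewrite msuppX mem_seq1 => /eqP ->; rewrite /mbideg !mnm1E. Qed.

Lemma bihomX_X1 : bihom 1 0 ('X_iX1 : S).
Proof. by move=> m; rewrite msuppX mem_seq1 => /eqP ->; rewrite /mbideg !mnm1E. Qed.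

Lemma bihomX_Y0 : bihom 0 1 ('X_iY0 : S).
Proof. by move=> m; rewrite msuppX mem_seq1 => /eqP ->; rewrite /mbideg !mnm1E. Qed.

Lemma bihomX_Y1 : bihom 0 1 ('X_iY1 : S).
Proof. by move=> m; rewrite msuppX mem_seq1 => /eqP ->; rewrite /mbideg !mnm1E. Qed.

Lemma sum_seq_delta (T : eqType) (r : seq T) (f : T -> K) x : uniq r ->
  \sum_(y <- r) f y * (y == x)%:R = if x \in r then f x else 0.
Proof.
elim: r => [|y r IH] /=; first by rewrite big_nil.
case/andP=> yr ur; rewrite big_cons IH // in_cons.
case: (eqVneq y x) => [<-|] /=; first by rewrite (negbTE yr) mulr1 addr0.
by rewrite mulr0 add0r.
Qed.

Lemma mcoeff_bicomp i j p m :
  (bicomp i j p)@_m = if mbideg m == (i, j) then p@_m else 0.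
Proof.
rewrite /bicomp raddf_sum /=.
under eq_bigr do rewrite mcoeffZ mcoeffX.
rewrite -big_filter sum_seq_delta ?filter_uniq ?msupp_uniq // mem_filter.
case: (mbideg m == (i, j)) => //=.
by case: (boolP (m \in msupp p)) => // /memN_msupp_eq0 ->.
Qed.

Lemma bicomp_id i j p : bihom i j p -> bicomp i j p = p.
Proof.
move=> /bihomP hp; apply/mpolyP => m; rewrite mcoeff_bicomp.
by case: eqP => // ne; case: (eqVneq p@_m 0) => // /hp.
Qed.

Lemma bicomp_eq0 i j i' j' p : bihom i j p -> (i', j') != (i, j) -> bicomp i' j' p = 0.
Proof.
move=> /bihomP hp ne; apply/mpolyP => m; rewrite mcoeff_bicomp mcoeff0.
case: eqP => // e; case: (eqVneq p@_m 0) => // /hp e'.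
by move: ne; rewrite -e -e' eqxx.
Qed.

Lemma bicomp_is_linear i j : linear (@bicomp K i j).
Proof.
move=> c p q; apply/mpolyP => m.
by rewrite mcoeffD mcoeffZ !mcoeff_bicomp mcoeffD mcoeffZ; case: ifP; rewrite ?mulr0 ?addr0.
Qed.

HB.instance Definition _ i j :=
  GRing.isLinear.Build K S S *:%R (@bicomp K i j) (bicomp_is_linear i j).

Lemma bihom_bicomp i j p : bihom i j (bicomp i j p).
Proof.
by apply/bihomP => m; rewrite mcoeff_bicomp; case: (mbideg m =P (i, j)) => // _; rewrite eqxx.
Qed.

Lemma bicomp_mull e f (h a : S) i j : bihom e f h ->
  bicomp i j (h * a) =
    if (e <= i)%N && (f <= j)%N then h * bicomp (i - e) (j - f) a else 0.
Proof.
move=> hh; rewrite {1}(mpolyE a) mulr_sumr linear_sum /=.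
have hX m : bicomp i j (h * (a@_m *: 'X_[m])) =
    if (e + (mbideg m).1 == i)%N && (f + (mbideg m).2 == j)%N
    then a@_m *: (h * 'X_[m]) else 0.
  rewrite -scalerAr linearZ /=.
  have hb : bihom (e + (mbideg m).1) (f + (mbideg m).2) (h * 'X_[m]).
    by apply: bihomM => // m'; rewrite msuppX mem_seq1 => /eqP ->; case: (mbideg m).
  case: ifP => [/andP[/eqP <- /eqP <-]|ne]; first by rewrite bicomp_id.
  rewrite (bicomp_eq0 hb) ?scaler0 //.
  by apply/negP => /eqP [e1 e2]; move: ne; rewrite e1 e2 !eqxx.
under eq_bigr do rewrite hX.
case: ifP => [/andP[hi hj]|ncond]; last first.
  rewrite big1 // => m _; case: ifP => // /andP[/eqP h1 /eqP h2].
  by move: ncond; rewrite -h1 -h2 !leq_addr.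
rewrite /bicomp mulr_sumr [RHS]big_mkcond /=; apply: eq_bigr => m _.
have -> : ((e + (mbideg m).1 == i)%N && (f + (mbideg m).2 == j)%N) =
          (mbideg m == (i - e, j - f)%N).
  by case: (mbideg m) => x y /=; rewrite xpair_eqE; congr andb; apply/eqP/eqP; lia.
by case: ifP => // _; rewrite scalerAr.
Qed.

Lemma vanishing_bihomP X i j p : bihom i j p ->
  in_vanishing_ideal X p <-> (forall P, P \in X -> eval_pt P p = 0).
Proof.
move=> hp; split=> h; first by move=> P PX; have := h i j P PX; rewrite bicomp_id.
move=> i' j' P PX; case: (eqVneq (i', j') (i, j)) => [[-> ->]|ne].
  by rewrite bicomp_id //; apply: h.
by rewrite (bicomp_eq0 hp ne) /eval_pt meval0.
Qed.

End Bihomogeneous.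

Definition bimon (s t a b : nat) : 'X_{1..4} :=
  [multinom (match val k with 0 => s - a | 1 => a | 2 => t - b | _ => b end)%N | k < 4].

Lemma bimonE s t m : mbideg m = (s, t) -> m = bimon s t (m iX1) (m iY1).
Proof.
rewrite /mbideg => -[<- <-]; apply/mnmP => -[[|[|[|[|//]]]] h]; rewrite mnmE /=.
- by rewrite addnK; congr (m _); apply: val_inj.
- by congr (m _); apply: val_inj.
- by rewrite addnK; congr (m _); apply: val_inj.
- by congr (m _); apply: val_inj.
Qed.

Section Dehomogenisation.
Variable K : fieldType.
Notation S := {mpoly K[4]}.
Implicit Types (p : S).

Lemma bihomE s t p : bihom s t p ->
  p = \sum_(a < s.+1) \sum_(b < t.+1) p@_(bimon s t a b) *: 'X_[bimon s t a b].
Proof.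
move=> /bihomP hp; apply/mpolyP => m; rewrite !raddf_sum /=.
under eq_bigr do rewrite raddf_sum /=; under eq_bigr do under eq_bigr do rewrite mcoeffZ mcoeffX.
case: (eqVneq p@_m 0) => [p0|/hp hm].
  rewrite p0 big1 // => a _; rewrite big1 // => b _.
  by case: eqP => [->|]; rewrite ?p0 ?mul0r ?mulr0.
have [ha hb] := hm; rewrite (bimonE hm).
have la : (m iX1 < s.+1)%N by rewrite ltnS -ha leq_addl.
have lb : (m iY1 < t.+1)%N by rewrite ltnS -hb leq_addl.
rewrite (bigD1 (Ordinal la)) //= (bigD1 (Ordinal lb)) //= eqxx mulr1.
rewrite big1 ?addr0 => [|b /= nb]; last first.
  case: eqP => [e|]; rewrite ?mulr0 //; move: nb; rewrite -val_eqE /=.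
  by have := congr1 (fun m : 'X_{1..4} => m iY1) e; rewrite !mnmE /= => ->; rewrite eqxx.
rewrite big1 ?addr0 // => a /= na; rewrite big1 // => b _.
case: eqP => [e|]; rewrite ?mulr0 //; move: na; rewrite -val_eqE /=.
by have := congr1 (fun m : 'X_{1..4} => m iX1) e; rewrite !mnmE /= => ->; rewrite eqxx.
Qed.

Lemma meval_bihom s t p v : bihom s t p ->
  p.@[v] = \sum_(a < s.+1) \sum_(b < t.+1) p@_(bimon s t a b) *
     (v iX0 ^+ (s - a) * v iX1 ^+ a * v iY0 ^+ (t - b) * v iY1 ^+ b).
Proof.
move=> hp; rewrite {1}(bihomE hp) raddf_sum /=; apply: eq_bigr => a _.
rewrite raddf_sum /=; apply: eq_bigr => b _; rewrite mevalZ mevalX; congr (_ * _).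
rewrite !big_ord_recl big_ord0 /bimon !mnmE /= mulr1 -!mulrA.
by congr (v _ ^+ _ * (v _ ^+ _ * (v _ ^+ _ * v _ ^+ _))); apply: val_inj.
Qed.

Definition dehom (x y : K) : 'I_4 -> K :=
  fun k => match val k with 0 => 1 | 1 => x | 2 => 1 | _ => y end.

Definition coords (P : (K * K) * (K * K)) : 'I_4 -> K :=
  fun k => match val k with 0 => P.1.1 | 1 => P.1.2 | 2 => P.2.1 | _ => P.2.2 end.

Lemma eval_ptE P p : eval_pt P p = p.@[coords P].
Proof. by []. Qed.

Lemma meval_bihom_dehom s t p v : bihom s t p -> v iX0 != 0 -> v iY0 != 0 ->
  p.@[v] = v iX0 ^+ s * v iY0 ^+ t * p.@[dehom (v iX1 / v iX0) (v iY1 / v iY0)].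
Proof.
move=> hp x0 y0; rewrite !(meval_bihom _ hp) mulr_sumr; apply: eq_bigr => a _.
have scale (z0 z1 : K) n k : z0 != 0 -> (k <= n)%N ->
    z0 ^+ (n - k) * z1 ^+ k = z0 ^+ n * (z1 / z0) ^+ k.
  move=> nz hk; rewrite expr_div_n -{2}(subnK hk) exprD.
  by have := expf_neq0 k nz => ?; field.
rewrite mulr_sumr; apply: eq_bigr => b _; rewrite /dehom /= !expr1n !mul1r.
rewrite -mulrA (scale _ _ _ _ x0) -1?ltnS // (scale _ _ _ _ y0) -1?ltnS //.
by ring.
Qed.

Definition bipair s t (f g : nat -> K) p : K :=
  \sum_(a < s.+1) \sum_(b < t.+1) p@_(bimon s t a b) * (f a * g b).

Lemma meval_dehom s t p x y : bihom s t p ->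
  p.@[dehom x y] = bipair s t (fun a => x ^+ a) (fun b => y ^+ b) p.
Proof.
move=> hp; rewrite (meval_bihom _ hp); apply: eq_bigr => a _; apply: eq_bigr => b _.
by rewrite /dehom /= !expr1n !mul1r mulr1.
Qed.

Lemma bipair_sum s t f g n (c : 'I_n -> K) (r : 'I_n -> S) :
  bipair s t f g (\sum_k c k *: r k) = \sum_k c k * bipair s t f g (r k).
Proof.
rewrite /bipair; under eq_bigr do under eq_bigr do rewrite raddf_sum mulr_suml.
under eq_bigr do rewrite exchange_big; rewrite exchange_big; apply: eq_bigr => k _.
rewrite mulr_sumr; apply: eq_bigr => a _; rewrite mulr_sumr; apply: eq_bigr => b _.
by rewrite /= mcoeffZ -mulrA.
Qed.

Lemma bipair_span s t f g mx my (w : 'I_mx -> K) (w' : 'I_my -> K)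
    (phi : 'I_mx -> nat -> K) (psi : 'I_my -> nat -> K) p :
  (forall a, (a <= s)%N -> f a = \sum_x w x * phi x a) ->
  (forall b, (b <= t)%N -> g b = \sum_y w' y * psi y b) ->
  bipair s t f g p = \sum_x \sum_y w x * w' y * bipair s t (phi x) (psi y) p.
Proof.
move=> hf hg; rewrite /bipair.
under eq_bigr => a _ do under eq_bigr => b _ do
  rewrite hf -1?ltnS // hg -1?ltnS // big_distrlr mulr_sumr.
under eq_bigr do rewrite exchange_big; rewrite exchange_big; apply: eq_bigr => x _.
under eq_bigr do under eq_bigr do rewrite mulr_sumr.
under eq_bigr do rewrite exchange_big; rewrite exchange_big; apply: eq_bigr => y _.
rewrite mulr_sumr; apply: eq_bigr => a _; rewrite mulr_sumr; apply: eq_bigr => b _.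
by rewrite /=; ring.
Qed.

End Dehomogenisation.

Section Forms.
Variable K : fieldType.
Notation S := {mpoly K[4]}.
Implicit Types (p q : S).

Lemma mbideg_addX1 m : mbideg (m + U_(iX1))%MM = ((mbideg m).1.+1, (mbideg m).2).
Proof. by rewrite /mbideg !mnmDE !mnm1E /= !addn0 addn1 addnS. Qed.

Lemma mbideg_addY1 m : mbideg (m + U_(iY1))%MM = ((mbideg m).1, (mbideg m).2.+1).
Proof. by rewrite /mbideg !mnmDE !mnm1E /= !addn0 addn1 addnS. Qed.

Lemma bihom_mderivX1 s t p : bihom s t p -> bihom s.-1 t (p^`M(iX1)).
Proof.
move=> /bihomP hp; apply/bihomP => m; rewrite mcoeff_deriv.
case: (eqVneq p@_(m + U_(iX1))%MM 0) => [->|]; first by rewrite mul0rn eqxx.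
by move=> /hp; rewrite mbideg_addX1 => -[<- <-].
Qed.

Lemma bihom_mderivY1 s t p : bihom s t p -> bihom s t.-1 (p^`M(iY1)).
Proof.
move=> /bihomP hp; apply/bihomP => m; rewrite mcoeff_deriv.
case: (eqVneq p@_(m + U_(iY1))%MM 0) => [->|]; first by rewrite mul0rn eqxx.
by move=> /hp; rewrite mbideg_addY1 => -[<- <-].
Qed.

Lemma mderivY1_xform d p : bihom d 0 p -> p^`M(iY1) = 0.
Proof.
move=> /bihomP hp; apply/mpolyP => m; rewrite mcoeff_deriv mcoeff0.
by case: (eqVneq p@_(m + U_(iY1))%MM 0) => [->|/hp]; rewrite ?mul0rn // mbideg_addY1.
Qed.

Lemma mderivX1_yform d p : bihom 0 d p -> p^`M(iX1) = 0.
Proof.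
move=> /bihomP hp; apply/mpolyP => m; rewrite mcoeff_deriv mcoeff0.
by case: (eqVneq p@_(m + U_(iX1))%MM 0) => [->|/hp]; rewrite ?mul0rn // mbideg_addX1.
Qed.

Definition xdehom d p : {poly K} := \poly_(a < d.+1) p@_(bimon d 0 a 0).
Definition ydehom d p : {poly K} := \poly_(b < d.+1) p@_(bimon 0 d 0 b).

Lemma horner_xdehom d p x y : bihom d 0 p -> p.@[dehom x y] = (xdehom d p).[x].
Proof.
move=> hp; rewrite (meval_dehom _ _ hp) horner_poly; apply: eq_bigr => a _.
by rewrite big_ord1 expr0 mulr1.
Qed.

Lemma horner_ydehom d p x y : bihom 0 d p -> p.@[dehom x y] = (ydehom d p).[y].
Proof.
move=> hp; rewrite (meval_dehom _ _ hp) horner_poly /bipair big_ord1.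
by apply: eq_bigr => b _; rewrite expr0 mul1r.
Qed.

Lemma xdehom_neq0 d p : bihom d 0 p -> p != 0 -> xdehom d p != 0.
Proof.
move=> hp; apply: contraNneq => e; rewrite (bihomE hp) big1 // => a _.
rewrite big_ord1; have := coef_poly d.+1 (fun a => p@_(bimon d 0 a 0)) a.
by rewrite -/(xdehom d p) e coef0 ltn_ord => <-; rewrite scale0r.
Qed.

Lemma ydehom_neq0 d p : bihom 0 d p -> p != 0 -> ydehom d p != 0.
Proof.
move=> hp; apply: contraNneq => e; rewrite (bihomE hp) big_ord1 big1 // => b _.
have := coef_poly d.+1 (fun b => p@_(bimon 0 d 0 b)) b.
by rewrite -/(ydehom d p) e coef0 ltn_ord => <-; rewrite scale0r.
Qed.

Lemma horner_mderivX1 d p x y : (0 < d)%N -> bihom d 0 p ->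
  (p^`M(iX1)).@[dehom x y] = (xdehom d p)^`().[x].
Proof.
move=> d0 hp; rewrite (horner_xdehom _ _ (bihom_mderivX1 hp)) /xdehom prednK //.
congr horner; apply/polyP => a; rewrite coef_deriv !coef_poly mcoeff_deriv ltnS.
case: ltnP => ha; last by rewrite mul0rn.
have -> : (bimon d.-1 0 a 0 + U_(iX1))%MM = bimon d 0 a.+1 0.
  by apply/mnmP => k; rewrite mnmDE mnm1E !mnmE; case: k => -[|[|[|[|]]]] //= _; lia.
by rewrite mnmE.
Qed.

Lemma horner_mderivY1 d p x y : (0 < d)%N -> bihom 0 d p ->
  (p^`M(iY1)).@[dehom x y] = (ydehom d p)^`().[y].
Proof.
move=> d0 hp; rewrite (horner_ydehom _ _ (bihom_mderivY1 hp)) /ydehom prednK //.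
congr horner; apply/polyP => b; rewrite coef_deriv !coef_poly mcoeff_deriv ltnS.
case: ltnP => hb; last by rewrite mul0rn.
have -> : (bimon 0 d.-1 0 b + U_(iY1))%MM = bimon 0 d 0 b.+1.
  by apply/mnmP => k; rewrite mnmDE mnm1E !mnmE; case: k => -[|[|[|[|]]]] //= _; lia.
by rewrite mnmE.
Qed.

Definition linprod (i0 i1 : 'I_4) (L : seq K) : S := \prod_(t <- L) (t *: 'X_i0 - 'X_i1).

Lemma bihom_linprod a b i0 i1 L : bihom a b ('X_i0 : S) -> bihom a b ('X_i1 : S) ->
  bihom (a * size L) (b * size L) (linprod i0 i1 L).
Proof. by move=> h0 h1; apply: bihom_prod => t; apply/bihomB/h1/bihomZ. Qed.

Lemma meval_linprod i0 i1 L v : (linprod i0 i1 L).@[v] = \prod_(t <- L) (t * v i0 - v i1).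
Proof.
rewrite /linprod rmorph_prod; apply: eq_bigr => t _.
by rewrite /= mevalB mevalZ !mevalXU.
Qed.

Lemma meval_linprod_eq0 i0 i1 L v : v i0 != 0 ->
  ((linprod i0 i1 L).@[v] == 0) = (v i1 / v i0 \in L).
Proof.
move=> nz; rewrite meval_linprod prodf_seq_eq0 -has_pred1; apply: eq_has => t /=.
by rewrite subr_eq0 (can2_eq (mulfK nz) (divfK nz)).
Qed.

Lemma meval_linprod_chart0 i0 i1 L v : v i0 = 0 ->
  (linprod i0 i1 L).@[v] = (- v i1) ^+ size L.
Proof.
move=> z; rewrite meval_linprod z; elim: L => [|t L IH]; first by rewrite big_nil.
by rewrite big_cons IH exprS mulr0 sub0r.
Qed.

Lemma linprod_neq0 i0 i1 L : i0 != i1 -> linprod i0 i1 L != 0.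
Proof.
move=> ne; apply/negP => /eqP /(congr1 (meval (fun k => (k == i1)%:R))).
rewrite meval0 meval_linprod_chart0 /= ?(negbTE ne) // eqxx => /eqP.
by rewrite expf_eq0 oppr_eq0 oner_eq0 andbF.
Qed.

Definition lagrange_form (i0 i1 : 'I_4) n (L : seq K) m (x : 'I_m) : S :=
  'X_i0 ^+ (n.+1 - m) * linprod i0 i1 (rem L`_x (take m L)).

Lemma bihom_lagrange_form a b i0 i1 n L m (x : 'I_m) : (m <= size L)%N -> (m <= n.+1)%N ->
  bihom a b ('X_i0 : S) -> bihom a b ('X_i1 : S) ->
  bihom (a * n) (b * n) (lagrange_form i0 i1 n L x).
Proof.
move=> hL hn h0 h1; have xL : L`_x \in take m L.
  by rewrite -(nth_take _ (ltn_ord x)) mem_nth // size_takel.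
have := bihomM (bihomXn (n := n.+1 - m) h0) (bihom_linprod (L := rem L`_x (take m L)) h0 h1).
rewrite size_rem // size_takel // -!mulnDr.
by have hx := ltn_ord x; have -> : (n.+1 - m + m.-1 = n)%N by lia.
Qed.

Lemma meval_lagrange_form i0 i1 n (L : seq K) m (x x' : 'I_m) v :
  uniq L -> (m <= size L)%N -> v i0 = 1 -> v i1 = L`_x' ->
  ((lagrange_form i0 i1 n L x).@[v] == 0) = (x' != x).
Proof.
move=> uL hm v0 v1; have hx' : (x' < size L)%N := leq_trans (ltn_ord x') hm.
rewrite mevalM rmorphXn /= mevalXU v0 expr1n mul1r.
rewrite meval_linprod_eq0 v0 ?oner_eq0 // v1 divr1 (mem_rem_uniq _ (take_uniq _ uL)) inE /=.
rewrite nth_uniq ?(leq_trans (ltn_ord x) hm) // -(inj_eq val_inj) /=.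
have -> : L`_x' \in take m L by rewrite -(nth_take _ (ltn_ord x')) mem_nth // size_takel.
by rewrite andbT.
Qed.

End Forms.

Section Ideals.
Variable K : fieldType.
Notation S := {mpoly K[4]}.
Variables F G : S.

Lemma in_ideal2P p : in_ideal [:: F; G] p <-> exists a b, p = a * F + b * G.
Proof.
rewrite /in_ideal /=; split => [[c ->]|[a [b ->]]].
  by exists (c 0%N), (c 1%N); rewrite !big_ord_recl big_ord0 /= addr0.
by exists (fun k => if k == 0%N then a else b); rewrite !big_ord_recl big_ord0 /= addr0.
Qed.

Lemma in_ideal3P h p : in_ideal [:: F; G; h] p <-> exists a b c, p = a * F + b * G + c * h.
Proof.
rewrite /in_ideal /=; split => [[c ->]|[a [b [c ->]]]].
  by exists (c 0%N), (c 1%N), (c 2%N); rewrite !big_ord_recl big_ord0 /= addr0 addrA.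
exists (fun k => if k == 0%N then a else if k == 1%N then b else c).
by rewrite !big_ord_recl big_ord0 /= addr0 addrA.
Qed.

(* Only the minor of (F, G) survives, as dF/dY1 = dG/dX1 = 0. *)
Lemma in_kahler_idealP d1 d2 p : bihom d1 0 F -> bihom 0 d2 G ->
  in_ideal (kahler_gens [:: F; G]) p <-> exists q, p = F^`M(iX1) * G^`M(iY1) * q.
Proof.
move=> hF hG; rewrite /in_ideal /kahler_gens /= (mderivY1_xform hF) (mderivX1_yform hG).
rewrite !mulr0 !mul0r !subrr sub0r subr0.
split=> [[c ->]|[q ->]].
  by exists (c 1%N - c 2%N); rewrite !big_ord_recl big_ord0 /= /bump /=; ring.
exists (fun k => if k == 1%N then q else 0).
by rewrite !big_ord_recl big_ord0 /= /bump /=; ring.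
Qed.

End Ideals.

Lemma deriv_root_neq0 (K : fieldType) (f : {poly K}) (L : seq K) :
  f != 0 -> uniq L -> (size f <= (size L).+1)%N -> all (root f) L ->
  forall t, t \in L -> f^`().[t] != 0.
Proof.
move=> fnz uL sf rL t tL.
have /factor_theorem [q fq] : root f t by apply: (allP rL).
have qnz : q != 0 by apply: contraNneq fnz => q0; rewrite fq q0 mul0r.
rewrite fq derivM derivXsubC mulr1 hornerD hornerM !hornerE subrr mulr0 add0r.
apply: contraTneq sf => qt; rewrite -ltnNge fq size_Mmonic ?monicXsubC // size_XsubC addn2 ltnS.
apply: max_poly_roots => //; apply/allP => x xL; case: (eqVneq x t) => [->|nxt].
  exact/rootP/qt.
have := allP rL x xL; rewrite fq /root hornerM !hornerE mulf_eq0.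
by rewrite subr_eq0 (negbTE nxt) orbF.
Qed.

Section LinearAlgebra.
Variable K : fieldType.

Lemma exists_dependency (J : finType) n (f : 'I_n -> J -> K) : (#|J| < n)%N ->
  exists2 c : 'I_n -> K, (exists k, c k != 0) & forall l, \sum_k c k * f k l = 0.
Proof.
move=> hn; pose M := \matrix_(k < n, l < #|J|) f k (enum_val l).
have : kermx M != 0.
  rewrite -mxrank_eq0 mxrank_ker subn_eq0 -ltnNge.
  exact: leq_ltn_trans (rank_leq_col M) hn.
case/rowV0Pn => v /sub_kermxP vM vnz; exists (v 0).
  apply/existsP; rewrite -negb_forall; apply: contra vnz => /forallP v0.
  by apply/eqP/rowP => k; rewrite mxE; apply/eqP.
move=> l; transitivity ((v *m M) 0 (enum_rank l)); last by rewrite vM mxE.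
by rewrite mxE; apply: eq_bigr => k _; rewrite mxE enum_rankK.
Qed.

Definition pair_index m n (k : 'I_(m * n)) : 'I_m * 'I_n :=
  enum_val (cast_ord (esym (mxvec_cast m n)) k).

Lemma pair_index_inj m n : injective (@pair_index m n).
Proof. by move=> k l /enum_val_inj /cast_ord_inj. Qed.

Lemma meval_dual_free n (v : 'I_n -> 'I_4 -> K) (g : 'I_n -> {mpoly K[4]}) (c : 'I_n -> K) :
  (forall k l, ((g l).@[v k] == 0) = (k != l)) ->
  (forall k, (\sum_l c l *: g l).@[v k] = 0) -> forall k, c k = 0.
Proof.
move=> hg h k; have := h k; rewrite raddf_sum (bigD1 k) //= big1 => [|l nl]; last first.
  rewrite mevalZ; have /eqP -> : (g l).@[v k] == 0 by rewrite hg eq_sym.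
  exact: mulr0.
by rewrite addr0 mevalZ => /eqP; rewrite mulf_eq0 hg eqxx orbF => /eqP.
Qed.

Definition pow_basis (L : seq K) s x a : K := if (s < size L)%N then (a == x)%:R else L`_x ^+ a.

Lemma pow_basis_span (L : seq K) s t : t \in L ->
  exists w : 'I_(minn s.+1 (size L)) -> K,
    forall a, (a <= s)%N -> t ^+ a = \sum_x w x * pow_basis L s x a.
Proof.
move=> tL; rewrite /pow_basis; case: ltnP => hs.
  exists (fun x => t ^+ x) => a ha; have ha' : (a < minn s.+1 (size L))%N by lia.
  rewrite (bigD1 (Ordinal ha')) //= eqxx mulr1 big1 ?addr0 // => x nx.
  by rewrite eq_sym -(inj_eq val_inj) /= in nx; rewrite (negbTE nx) mulr0.
have hi : (index t L < minn s.+1 (size L))%N by rewrite (minn_idPr (leqW hs)) index_mem.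
exists (fun x => ((x : nat) == index t L)%:R) => a _.
rewrite (bigD1 (Ordinal hi)) //= eqxx mul1r nth_index // big1 ?addr0 // => x nx.
by rewrite -(inj_eq val_inj) /= in nx; rewrite (negbTE nx) mul0r.
Qed.

End LinearAlgebra.

Definition hfline (d i : nat) : nat := if (d.-1 <= i)%N then minn (i - d.-1).+1 d else 0.

Definition diff1 (f : nat -> nat) (i : nat) : int :=
  (f i)%:Z - (if i is i'.+1 then (f i')%:Z else 0).

Lemma Delta_mul (f g : nat -> nat) i j :
  Delta (fun i j => f i * g j)%N i j = diff1 f i * diff1 g j.
Proof. by rewrite /Delta /diff1; case: i => [|i]; case: j => [|j]; rewrite !PoszM; ring. Qed.

Lemma diff1_hfline d i : (0 < d)%N ->
  diff1 (hfline d) i = if (d.-1 <= i <= 2 * d - 2)%N then 1 else 0.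
Proof.
move=> d0; rewrite /diff1 /hfline; case: i => [|i]; first by case: d d0 => [|[|d]].
case: (leqP d.-1 i) => h1; case: (leqP d.-1 i.+1) => h2; case: (leqP i.+1 (2 * d - 2)) => h3 /=;
  apply/eqP; rewrite ?subr_eq0 ?subr_eq ?eqz_nat; lia.
Qed.

Lemma eq_Delta (H1 H2 : nat -> nat -> nat) i j : (forall i j, H1 i j = H2 i j) ->
  Delta H1 i j = Delta H2 i j.
Proof. by move=> e; rewrite /Delta; case: i => [|i]; case: j => [|j]; rewrite !e. Qed.

Lemma maxnat_eq (Q : nat -> Prop) N : Q N -> (forall m, Q m -> (m <= N)%N) -> maxnat Q = N.
Proof.
move=> hN hle; rewrite /maxnat; case: excluded_middle_informative => [h|[]]; last by exists N.
case: (constructive_indefinite_description _ h) => n [Qn hn] /=.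
by apply/eqP; rewrite eqn_leq hle //= hn.
Qed.

Section PointSet.
Variables (K : fieldType) (X : seq ((K * K) * (K * K))).
Notation S := {mpoly K[4]}.
Implicit Types (P : (K * K) * (K * K)).

Lemma point_ok_X1 P : point_ok P -> coords P iX0 = 0 -> coords P iX1 != 0.
Proof.
case=> /eqP nP _ z; apply/eqP => z'; apply: nP.
by rewrite [P.1]surjective_pairing (z : P.1.1 = 0) (z' : P.1.2 = 0).
Qed.

Lemma point_ok_Y1 P : point_ok P -> coords P iY0 = 0 -> coords P iY1 != 0.
Proof.
case=> _ /eqP nP z; apply/eqP => z'; apply: nP.
by rewrite [P.2]surjective_pairing (z : P.2.1 = 0) (z' : P.2.2 = 0).
Qed.

(* Times X_i0 it vanishes on X, yet it vanishes at no point of X on the line x_i0 = 0. *)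
Definition chart_form (i0 i1 : 'I_4) : S :=
  linprod i0 i1 [seq coords Q i1 / coords Q i0 | Q <- X & coords Q i0 != 0].

Lemma chart_form_vanishes i0 i1 P : P \in X -> eval_pt P ('X_i0 * chart_form i0 i1) = 0.
Proof.
move=> PX; rewrite eval_ptE mevalM mevalXU.
case: (eqVneq (coords P i0) 0) => [->|nz]; first by rewrite mul0r.
apply/eqP; rewrite mulf_eq0 meval_linprod_eq0 //; apply/orP; right.
by apply/mapP; exists P; rewrite // mem_filter nz.
Qed.

Lemma chart_form_neq0 i0 i1 P :
  coords P i0 = 0 -> coords P i1 != 0 -> eval_pt P (chart_form i0 i1) != 0.
Proof. by move=> z nz; rewrite eval_ptE meval_linprod_chart0 // expf_neq0 // oppr_eq0. Qed.

Definition xnodes := undup [seq coords P iX1 / coords P iX0 | P <- X].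
Definition ynodes := undup [seq coords P iY1 / coords P iY0 | P <- X].

Lemma mem_xnodes P : P \in X -> coords P iX1 / coords P iX0 \in xnodes.
Proof. by move=> PX; rewrite mem_undup; apply: map_f. Qed.

Lemma mem_ynodes P : P \in X -> coords P iY1 / coords P iY0 \in ynodes.
Proof. by move=> PX; rewrite mem_undup; apply: map_f. Qed.

Lemma xnodesP t : t \in xnodes -> exists2 P, P \in X & coords P iX1 / coords P iX0 = t.
Proof. by rewrite mem_undup => /mapP [P PX ->]; exists P. Qed.

Lemma ynodesP u : u \in ynodes -> exists2 P, P \in X & coords P iY1 / coords P iY0 = u.
Proof. by rewrite mem_undup => /mapP [P PX ->]; exists P. Qed.

End PointSet.

Section CompleteIntersection.
Variables (K : fieldType) (X : seq ((K * K) * (K * K))) (d1 d2 : nat) (F G : {mpoly K[4]}).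
Notation S := {mpoly K[4]}.
Implicit Types (P : (K * K) * (K * K)) (p : S).
Hypothesis X_neq0 : X != [::].
Hypothesis X_ok : forall P, P \in X -> point_ok P.
Hypothesis F_bihom : bihom d1 0 F.
Hypothesis G_bihom : bihom 0 d2 G.
Hypothesis vanishing_idealE : forall p, in_vanishing_ideal X p <-> in_ideal [:: F; G] p.
Hypothesis x0_regular : forall p, in_vanishing_ideal X ('X_iX0 * p) -> in_vanishing_ideal X p.
Hypothesis y0_regular : forall p, in_ideal [:: F; G; 'X_iX0] ('X_iY0 * p) ->
  in_ideal [:: F; G; 'X_iX0] p.

Lemma ideal_vanishes i j p : bihom i j p -> in_ideal [:: F; G] p ->
  forall P, P \in X -> eval_pt P p = 0.
Proof. by move=> hp /vanishing_idealE /(vanishing_bihomP _ hp). Qed.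

Lemma vanishes_ideal i j p : bihom i j p -> (forall P, P \in X -> eval_pt P p = 0) ->
  in_ideal [:: F; G] p.
Proof. by move=> hp /(vanishing_bihomP _ hp) /vanishing_idealE. Qed.

Lemma F_vanishes P : P \in X -> eval_pt P F = 0.
Proof.
by apply: (ideal_vanishes F_bihom); apply/in_ideal2P; exists 1, 0; rewrite mul1r mul0r addr0.
Qed.

Lemma G_vanishes P : P \in X -> eval_pt P G = 0.
Proof.
by apply: (ideal_vanishes G_bihom); apply/in_ideal2P; exists 0, 1; rewrite mul1r mul0r add0r.
Qed.

Lemma bihom00_in_ideal p : bihom 0 0 p -> in_ideal [:: F; G] p -> p = 0.
Proof.
move=> hp hin; have pE : p = p@_(bimon 0 0 0 0) *: 1.
  rewrite {1}(bihomE hp) !big_ord1 -mpolyX0; congr (_ *: 'X_[_]).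
  by apply/mnmP => k; rewrite !mnmE ?mnm0E; case: (val k) => [|[|[|]]].
have P0X : nth ((0, 0), (0, 0)) X 0 \in X by rewrite mem_nth // lt0n size_eq0.
have := ideal_vanishes hp hin P0X; rewrite pE eval_ptE mevalZ meval1 mulr1 => ->.
by rewrite scale0r.
Qed.

Lemma bicomp_xform_mulG n (b : S) : bicomp n 0 (G * b) = 0.
Proof.
case: (posnP d2) => [d2_0|d2_pos]; last first.
  by rewrite (bicomp_mull _ _ _ G_bihom) (leqNgt d2) d2_pos andbF.
have -> : G = 0.
  apply: bihom00_in_ideal; first by rewrite -{2}d2_0.
  by apply/in_ideal2P; exists 0, 1; rewrite mul1r mul0r add0r.
by rewrite mul0r linear0.
Qed.

Lemma bicomp_yform_mulF n (b : S) : bicomp 0 n (F * b) = 0.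
Proof.
case: (posnP d1) => [d1_0|d1_pos]; last first.
  by rewrite (bicomp_mull _ _ _ F_bihom) (leqNgt d1) d1_pos.
have -> : F = 0.
  apply: bihom00_in_ideal; first by rewrite -{1}d1_0.
  by apply/in_ideal2P; exists 1, 0; rewrite mul1r mul0r addr0.
by rewrite mul0r linear0.
Qed.

Lemma xform_in_ideal n p : bihom n 0 p -> p != 0 -> in_ideal [:: F; G] p ->
  F != 0 /\ (d1 <= n)%N.
Proof.
move=> hp pnz /in_ideal2P [a [b e]]; move: pnz.
rewrite -(bicomp_id hp) e linearD /= mulrC (mulrC b) bicomp_xform_mulG addr0.
rewrite (bicomp_mull _ _ _ F_bihom) /=; case: ifP => [/andP[hn _]|]; last by rewrite eqxx.
by rewrite mulf_eq0 negb_or => /andP[nz _]; split.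
Qed.

Lemma yform_in_ideal n p : bihom 0 n p -> p != 0 -> in_ideal [:: F; G] p ->
  G != 0 /\ (d2 <= n)%N.
Proof.
move=> hp pnz /in_ideal2P [a [b e]]; move: pnz.
rewrite -(bicomp_id hp) e linearD /= mulrC (mulrC b) bicomp_yform_mulF add0r.
rewrite (bicomp_mull _ _ _ G_bihom) /=; case: ifP => [hn|]; last by rewrite eqxx.
by rewrite mulf_eq0 negb_or => /andP[nz _]; split.
Qed.

Lemma yform_in_ideal3 n p : bihom 0 n p -> in_ideal [:: F; G; 'X_iX0] p -> in_ideal [:: F; G] p.
Proof.
move=> hp /in_ideal3P [a [b [c e]]]; apply/in_ideal2P.
rewrite -(bicomp_id hp) e !linearD /= (mulrC a) (mulrC b) (mulrC c) bicomp_yform_mulF.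
rewrite (bicomp_mull _ _ _ G_bihom) (bicomp_mull _ _ _ (@bihomX_X0 K)) /= add0r addr0.
case: ifP => _; last by exists 0, 0; rewrite !mul0r addr0.
by exists 0, (bicomp 0 (n - d2) b); rewrite mul0r add0r mulrC.
Qed.

Lemma X0_neq0 P : P \in X -> coords P iX0 != 0.
Proof.
move=> PX; apply/negP => /eqP z; have hX1 := point_ok_X1 (X_ok PX) z.
have hc := bihom_linprod (L := [seq coords Q iX1 / coords Q iX0 | Q <- X & coords Q iX0 != 0])
  (@bihomX_X0 K) (@bihomX_X1 K).
have : in_vanishing_ideal X ('X_iX0 * chart_form X iX0 iX1).
  by apply/(vanishing_bihomP _ (bihomM (@bihomX_X0 K) hc)) => Q; apply: chart_form_vanishes.
move/x0_regular/(vanishing_bihomP _ hc)/(_ P PX)/eqP.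
by apply/negP; apply: chart_form_neq0.
Qed.

Lemma Y0_neq0 P : P \in X -> coords P iY0 != 0.
Proof.
move=> PX; apply/negP => /eqP z; have hY1 := point_ok_Y1 (X_ok PX) z.
have hc := bihom_linprod (L := [seq coords Q iY1 / coords Q iY0 | Q <- X & coords Q iY0 != 0])
  (@bihomX_Y0 K) (@bihomX_Y1 K).
have : in_ideal [:: F; G; 'X_iX0] ('X_iY0 * chart_form X iY0 iY1).
  have /in_ideal2P [a [b ->]] := vanishes_ideal (bihomM (@bihomX_Y0 K) hc)
    (chart_form_vanishes iY0 iY1).
  by apply/in_ideal3P; exists a, b, 0; rewrite mul0r addr0.
move/y0_regular/(yform_in_ideal3 hc)/(ideal_vanishes hc)/(_ P PX)/eqP.
by apply/negP; apply: chart_form_neq0.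
Qed.

Lemma eval_pt_eq0 s t p P : bihom s t p -> P \in X ->
  (eval_pt P p == 0) =
  (p.@[dehom (coords P iX1 / coords P iX0) (coords P iY1 / coords P iY0)] == 0).
Proof.
move=> hp PX; rewrite eval_ptE (meval_bihom_dehom hp) ?X0_neq0 ?Y0_neq0 //.
by rewrite !mulf_eq0 !expf_eq0 (negbTE (X0_neq0 PX)) (negbTE (Y0_neq0 PX)) !andbF.
Qed.

Lemma root_xdehom_F t : t \in xnodes X -> root (xdehom d1 F) t.
Proof.
case/xnodesP => P PX <-; have := F_vanishes PX.
by move/eqP; rewrite (eval_pt_eq0 F_bihom PX) (horner_xdehom _ _ F_bihom).
Qed.

Lemma root_ydehom_G u : u \in ynodes X -> root (ydehom d2 G) u.
Proof.
case/ynodesP => P PX <-; have := G_vanishes PX.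
by move/eqP; rewrite (eval_pt_eq0 G_bihom PX) (horner_ydehom _ _ G_bihom).
Qed.

Lemma linprod_xnodes_vanishes P : P \in X -> eval_pt P (linprod iX0 iX1 (xnodes X)) = 0.
Proof. by move=> PX; apply/eqP; rewrite eval_ptE meval_linprod_eq0 ?X0_neq0 ?mem_xnodes. Qed.

Lemma linprod_ynodes_vanishes P : P \in X -> eval_pt P (linprod iY0 iY1 (ynodes X)) = 0.
Proof. by move=> PX; apply/eqP; rewrite eval_ptE meval_linprod_eq0 ?Y0_neq0 ?mem_ynodes. Qed.

Lemma xnode_form_in_ideal : F != 0 /\ (d1 <= size (xnodes X))%N.
Proof.
have hL := bihom_linprod (L := xnodes X) (@bihomX_X0 K) (@bihomX_X1 K); rewrite mul1n mul0n in hL.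
exact: xform_in_ideal hL (@linprod_neq0 K iX0 iX1 _ isT)
  (vanishes_ideal hL linprod_xnodes_vanishes).
Qed.

Lemma ynode_form_in_ideal : G != 0 /\ (d2 <= size (ynodes X))%N.
Proof.
have hL := bihom_linprod (L := ynodes X) (@bihomX_Y0 K) (@bihomX_Y1 K); rewrite mul1n mul0n in hL.
exact: yform_in_ideal hL (@linprod_neq0 K iY0 iY1 _ isT)
  (vanishes_ideal hL linprod_ynodes_vanishes).
Qed.

Lemma size_xnodes : size (xnodes X) = d1.
Proof.
have [Fnz le_d1] := xnode_form_in_ideal; apply/eqP; rewrite eqn_leq le_d1 andbT -ltnS.
apply: leq_trans (size_poly _ _); apply: max_poly_roots (undup_uniq _).
  exact: xdehom_neq0 F_bihom Fnz.
by apply/allP => t; apply: root_xdehom_F.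
Qed.

Lemma size_ynodes : size (ynodes X) = d2.
Proof.
have [Gnz le_d2] := ynode_form_in_ideal; apply/eqP; rewrite eqn_leq le_d2 andbT -ltnS.
apply: leq_trans (size_poly _ _); apply: max_poly_roots (undup_uniq _).
  exact: ydehom_neq0 G_bihom Gnz.
by apply/allP => u; apply: root_ydehom_G.
Qed.

Lemma d1_gt0 : (0 < d1)%N.
Proof.
have [P PX] : exists P, P \in X by case: X X_neq0 => [|P X'] // _; exists P; apply: mem_head.
by rewrite -size_xnodes; case: (xnodes X) (mem_xnodes PX).
Qed.

Lemma d2_gt0 : (0 < d2)%N.
Proof.
have [P PX] : exists P, P \in X by case: X X_neq0 => [|P X'] // _; exists P; apply: mem_head.
by rewrite -size_ynodes; case: (ynodes X) (mem_ynodes PX).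
Qed.

Lemma F_dehom_eq0 t u : t \in xnodes X -> F.@[dehom t u] = 0.
Proof. by move=> tT; rewrite (horner_xdehom _ _ F_bihom); apply/eqP/root_xdehom_F. Qed.

Lemma G_dehom_eq0 t u : u \in ynodes X -> G.@[dehom t u] = 0.
Proof. by move=> uU; rewrite (horner_ydehom _ _ G_bihom); apply/eqP/root_ydehom_G. Qed.

(* Otherwise the product of the lines through the other nodes would lie in I_X
   without vanishing at (t, u), where F and G do. *)
Lemma grid_subset t u : t \in xnodes X -> u \in ynodes X ->
  exists2 P, P \in X &
    coords P iX1 / coords P iX0 = t /\ coords P iY1 / coords P iY0 = u.
Proof.
move=> tT uU; set xr := fun P => coords P iX1 / coords P iX0.
set yr := fun P => coords P iY1 / coords P iY0.
case: (boolP (has (fun P => (xr P == t) && (yr P == u)) X)).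
  by case/hasP => P PX /andP[/eqP e1 /eqP e2]; exists P.
move/hasPn => notP; exfalso.
set A := linprod iX0 iX1 (rem t (xnodes X)); set B := linprod iY0 iY1 (rem u (ynodes X)).
have hA := bihom_linprod (L := rem t (xnodes X)) (@bihomX_X0 K) (@bihomX_X1 K).
have hB := bihom_linprod (L := rem u (ynodes X)) (@bihomX_Y0 K) (@bihomX_Y1 K).
have /in_ideal2P [a [b e]] : in_ideal [:: F; G] (A * B).
  apply: (vanishes_ideal (bihomM hA hB)) => P PX; apply/eqP.
  rewrite eval_ptE mevalM mulf_eq0 !meval_linprod_eq0 ?X0_neq0 ?Y0_neq0 //.
  rewrite !mem_rem_uniq ?undup_uniq // !inE mem_xnodes ?mem_ynodes // !andbT.
  by have := notP P PX; rewrite negb_and => /orP[] ->; rewrite ?orbT.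
have := congr1 (meval (dehom t u)) e.
rewrite !mevalD !mevalM F_dehom_eq0 // G_dehom_eq0 // !mulr0 addr0 => /eqP.
rewrite mulf_eq0 !meval_linprod_eq0 ?oner_eq0 // /dehom /= !divr1.
by rewrite !mem_rem_uniqF ?undup_uniq.
Qed.

Definition kahler_minor : S := F^`M(iX1) * G^`M(iY1).

Lemma bihom_kahler_minor : bihom d1.-1 d2.-1 kahler_minor.
Proof.
by have := bihomM (bihom_mderivX1 F_bihom) (bihom_mderivY1 G_bihom); rewrite addn0 add0n.
Qed.

(* The roots of F and G are simple, being as many as their degrees. *)
Lemma kahler_minor_neq0 t u : t \in xnodes X -> u \in ynodes X ->
  kahler_minor.@[dehom t u] != 0.
Proof.
move=> tT uU; rewrite mevalM (horner_mderivX1 _ _ d1_gt0 F_bihom).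
rewrite (horner_mderivY1 _ _ d2_gt0 G_bihom) mulf_neq0 //.
  apply: (deriv_root_neq0 (xdehom_neq0 F_bihom xnode_form_in_ideal.1) (undup_uniq _)) tT.
    by rewrite size_xnodes size_poly.
  by apply/allP => x; apply: root_xdehom_F.
apply: (deriv_root_neq0 (ydehom_neq0 G_bihom ynode_form_in_ideal.1) (undup_uniq _)) uU.
  by rewrite size_ynodes size_poly.
by apply/allP => y; apply: root_ydehom_G.
Qed.

Lemma minor_mul_vanishingP s t q : bihom s t q ->
  in_vanishing_ideal X (kahler_minor * q) <->
  (forall x y, x \in xnodes X -> y \in ynodes X -> q.@[dehom x y] = 0).
Proof.
move=> hq; have hDq := bihomM bihom_kahler_minor hq.
rewrite (vanishing_bihomP _ hDq); split => h.
  move=> x y xT yU; have [P PX [<- <-]] := grid_subset xT yU.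
  have /eqP := h P PX; rewrite (eval_pt_eq0 hDq PX) mevalM mulf_eq0.
  by rewrite (negbTE (kahler_minor_neq0 (mem_xnodes PX) (mem_ynodes PX))) => /eqP.
move=> P PX; apply/eqP; rewrite (eval_pt_eq0 hDq PX) mevalM.
by rewrite h ?mulr0 ?mem_xnodes ?mem_ynodes.
Qed.

Definition kahler_family i j n := exists g : 'I_n -> S,
  (forall k, in_ideal (kahler_gens [:: F; G]) (g k) /\ bihom i j (g k)) /\
  (forall c : 'I_n -> K, in_vanishing_ideal X (\sum_(k < n) c k *: g k) -> forall k, c k = 0).

Lemma kahler_family0 i j : kahler_family i j 0.
Proof.
exists (fun=> 0); split=> [k|c _ []//]; split; last exact: bihom0.
by apply/(in_kahler_idealP _ F_bihom G_bihom); exists 0; rewrite mulr0.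
Qed.

Lemma kahler_elementE i j g : in_ideal (kahler_gens [:: F; G]) g -> bihom i j g ->
  exists2 r, bihom (i - d1.-1) (j - d2.-1) r &
    g = if (d1.-1 <= i)%N && (d2.-1 <= j)%N then kahler_minor * r else 0.
Proof.
move=> /(in_kahler_idealP _ F_bihom G_bihom) [q ->]; rewrite -/kahler_minor => hg.
exists (bicomp (i - d1.-1) (j - d2.-1) q); first exact: bihom_bicomp.
by rewrite -{1}(bicomp_id hg) (bicomp_mull _ _ _ bihom_kahler_minor).
Qed.

Lemma grid_dependency s t n (r : 'I_n -> S) : (forall k, bihom s t (r k)) ->
  (minn s.+1 d1 * minn t.+1 d2 < n)%N ->
  exists2 c : 'I_n -> K, (exists k, c k != 0) &
    forall x y, x \in xnodes X -> y \in ynodes X -> (\sum_k c k *: r k).@[dehom x y] = 0.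
Proof.
move=> hr; rewrite -{1}size_xnodes -size_ynodes => hn.
set mx := minn s.+1 _ in hn; set my := minn t.+1 _ in hn.
pose f k (xy : 'I_mx * 'I_my) :=
  bipair s t (pow_basis (xnodes X) s xy.1) (pow_basis (ynodes X) t xy.2) (r k).
have [c cnz hc] : exists2 c : 'I_n -> K, (exists k, c k != 0) &
    forall xy, \sum_k c k * f k xy = 0.
  by apply: exists_dependency; rewrite card_prod !card_ord.
exists c => // x y xT yU.
have [w hw] := pow_basis_span s xT; have [w' hw'] := pow_basis_span t yU.
have hs : bihom s t (\sum_k c k *: r k) by apply: bihom_sum => k _; apply: bihomZ.
rewrite (meval_dehom _ _ hs) (bipair_span _ hw hw') big1 // => x' _; rewrite big1 // => y' _.
by rewrite bipair_sum (hc (x', y')) mulr0.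
Qed.

Lemma kahler_family_le i j n : kahler_family i j n -> (n <= hfline d1 i * hfline d2 j)%N.
Proof.
case=> g [hg free]; rewrite leqNgt; apply/negP => hn.
have /fin_all_exists [r hr] : forall k, exists r, bihom (i - d1.-1) (j - d2.-1) r /\
    g k = if (d1.-1 <= i)%N && (d2.-1 <= j)%N then kahler_minor * r else 0.
  by move=> k; have [r ? ?] := kahler_elementE (hg k).1 (hg k).2; exists r.
case: (boolP ((d1.-1 <= i)%N && (d2.-1 <= j)%N)) => [hij|nij]; last first.
  have k0 : 'I_n by apply: Ordinal (leq_ltn_trans (leq0n _) hn).
  suff /eqP : (1 : K) = 0 by rewrite oner_eq0.
  apply: (free (fun=> 1) _ k0).
  rewrite big1 => [|k _]; last by rewrite (hr k).2 (negbTE nij) scaler0.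
  by apply/(vanishing_bihomP _ (@bihom0 K i j)) => P _; rewrite eval_ptE meval0.
move: hn; case/andP: (hij) => hi hj; rewrite /hfline hi hj.
move=> /(grid_dependency (fun k => (hr k).1)).
case=> c [k ck] hc; move/negP: ck; apply; apply/eqP; apply: free.
have -> : \sum_k c k *: g k = kahler_minor * \sum_k c k *: r k.
  by rewrite mulr_sumr; apply: eq_bigr => k' _; rewrite (hr k').2 hij scalerAr.
apply/(minor_mul_vanishingP (s := i - d1.-1) (t := j - d2.-1)) => //.
by apply: bihom_sum => k' _; apply/bihomZ/(hr k').1.
Qed.

Lemma kahler_family_hfline i j : (d1.-1 <= i)%N -> (d2.-1 <= j)%N ->
  kahler_family i j (hfline d1 i * hfline d2 j).
Proof.
move=> hi hj; rewrite /hfline hi hj; set s := (i - d1.-1)%N; set t := (j - d2.-1)%N.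
rewrite -[in minn s.+1 _]size_xnodes -[in minn t.+1 _]size_ynodes.
set mx := minn s.+1 _; set my := minn t.+1 _.
have mxT : (mx <= size (xnodes X))%N by apply: geq_minr.
have myU : (my <= size (ynodes X))%N by apply: geq_minr.
pose q (k : 'I_(mx * my)) : S :=
  lagrange_form iX0 iX1 s (xnodes X) (pair_index k).1 *
  lagrange_form iY0 iY1 t (ynodes X) (pair_index k).2.
have hq k : bihom s t (q k).
  have := bihomM
    (bihom_lagrange_form (x := (pair_index k).1) mxT (geq_minl _ _) (@bihomX_X0 K) (@bihomX_X1 K))
    (bihom_lagrange_form (x := (pair_index k).2) myU (geq_minl _ _) (@bihomX_Y0 K) (@bihomX_Y1 K)).
  by rewrite !mul1n !mul0n addn0 add0n.
exists (fun k => kahler_minor * q k); split.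
  move=> k; split; first by apply/(in_kahler_idealP _ F_bihom G_bihom); exists (q k).
  by have := bihomM bihom_kahler_minor (hq k); rewrite /s /t !subnKC.
move=> c; have -> : \sum_k c k *: (kahler_minor * q k) = kahler_minor * \sum_k c k *: q k.
  by rewrite mulr_sumr; apply: eq_bigr => k _; rewrite scalerAr.
have hs : bihom s t (\sum_k c k *: q k) by apply: bihom_sum => k _; apply: bihomZ.
move/(minor_mul_vanishingP hs) => vanish.
pose v (k : 'I_(mx * my)) := dehom (xnodes X)`_(pair_index k).1 (ynodes X)`_(pair_index k).2.
apply: (meval_dual_free (g := q) (v := v)).
  move=> k l; rewrite /q mevalM mulf_eq0.
  rewrite (meval_lagrange_form _ _ (x' := (pair_index k).1)) ?undup_uniq //.
  rewrite (meval_lagrange_form _ _ (x' := (pair_index k).2)) ?undup_uniq //.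
  by rewrite -negb_and -xpair_eqE -!surjective_pairing (inj_eq (@pair_index_inj _ _)).
move=> k; apply: vanish; apply: mem_nth.
  exact: leq_trans (ltn_ord _) mxT.
exact: leq_trans (ltn_ord _) myU.
Qed.

Lemma HF_kahler i j :
  HF_quot_ideal (in_vanishing_ideal X) (kahler_gens [:: F; G]) i j = (hfline d1 i * hfline d2 j)%N.
Proof.
apply: maxnat_eq; last exact: kahler_family_le.
case: (boolP ((d1.-1 <= i)%N && (d2.-1 <= j)%N)) => [/andP[hi hj]|nij].
  exact: kahler_family_hfline.
suff -> : (hfline d1 i * hfline d2 j = 0)%N by apply: kahler_family0.
by move: nij; rewrite /hfline negb_and => /orP[] /negbTE ->; rewrite ?muln0.
Qed.

End CompleteIntersection.

Theorem corollary7p4 (K : fieldType) (X : seq ((K * K) * (K * K)))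
    (d1 d2 : nat) (F G : {mpoly K[4]}) :
  [pchar K] =i pred0 ->
  X != [::] -> (forall P, P \in X -> point_ok P) ->
  (* I_X is generated by F of degree (d1,0) and G of degree (0,d2) *)
  bihom d1 0 F -> bihom 0 d2 G ->
  (forall p, in_vanishing_ideal X p <-> in_ideal [:: F; G] p) ->
  (d1 <= d2)%N ->
  (* x_0, y_0 is a regular sequence in R_X = S / I_X *)
  (forall p, in_vanishing_ideal X ('X_iX0 * p) -> in_vanishing_ideal X p) ->
  (forall p, in_ideal [:: F; G; 'X_iX0] ('X_iY0 * p) ->
             in_ideal [:: F; G; 'X_iX0] p) ->
  forall i j : nat,
    Delta (HF_quot_ideal (in_vanishing_ideal X) (kahler_gens [:: F; G])) i j =
    (if [&& (d1.-1 <= i)%N, (i <= 2 * d1 - 2)%N,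
            (d2.-1 <= j)%N & (j <= 2 * d2 - 2)%N] then 1 else 0).
Proof.
move=> _ X_neq0 X_ok F_bihom G_bihom IX _ x0_reg y0_reg i j.
have HF := HF_kahler X_neq0 X_ok F_bihom G_bihom IX x0_reg y0_reg.
rewrite (eq_Delta _ _ HF) Delta_mul !diff1_hfline.
- by rewrite andbA; case: (_ && _); case: (_ && _); rewrite ?mulr1 ?mulr0.
- exact: d2_gt0 X_neq0 X_ok F_bihom G_bihom IX x0_reg y0_reg.
- exact: d1_gt0 X_neq0 X_ok F_bihom G_bihom IX x0_reg y0_reg.
Qed.
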